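(* Let $\tilde x:\mathbb{R}^{\tau p}\to\mathbb{R}^{\tau d}$ be a trajectory function of horizon $\tau$ whose dynamics $\phi_t$ are differentiable, $L_0$-Lipschitz continuous and have $L_1$-Lipschitz continuous gradients; let $h:\mathbb{R}^d\to\mathbb{R}$ be convex, differentiable with $L_1^h$-Lipschitz continuous gradient; let $g:\mathbb{R}^{\tau p}\to\mathbb{R}$ be convex, real $\tau$-decomposable, differentiable with $L_1^g$-Lipschitz continuous gradient. Consider the problem $\min_{\bar u}h(\tilde x_\tau(\bar u))+g(\bar u)$, a point $\bar u$ and $\gamma>0$. Then the regularized Gauss-Newton subproblem $$\min_{\bar v\in\mathbb{R}^{\tau p}}\ h\big(\tilde x_\tau(\bar u)+\nabla\tilde x_\tau(\bar u)^\top\bar v\big)+g(\bar u+\bar v)+\tfrac{1}{2\gamma}\|\bar v\|_2^2$$ is solved up to accuracy $\varepsilon$ by a fast gradient method with at most $$\mathcal{O}\Big(\sqrt{L_1^hM_0^2\gamma+L_1^g\gamma+1}\,\log(1/\varepsilon)\Big)$$ calls to an automatic-differentiation oracle, where $M_0$ is the Lipschitz constant of $\tilde x_\tau$.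
   Context: A trajectory function of horizon $\tau$ is $\tilde x(\bar u)=(\tilde x_1(\bar u);\ldots;\tilde x_\tau(\bar u))$ with $\tilde x_1(\bar u)=\phi_0(\hat x_0,u_0)$, $\tilde x_{t+1}(\bar u)=\phi_t(\tilde x_t(\bar u),u_t)$, for given $\hat x_0\in\mathbb{R}^d$, maps $\phi_t:\mathbb{R}^d\times\mathbb{R}^p\to\mathbb{R}^d$ and $\bar u=(u_0;\ldots;u_{\tau-1})\in\mathbb{R}^{\tau p}$. A function $g:\mathbb{R}^{\tau p}\to\mathbb{R}$ is real $\tau$-decomposable if $g(\bar u)=\sum_t g_t(u_t)$. For differentiable $F:\mathbb{R}^n\to\mathbb{R}^m$, $\nabla F(z)\in\mathbb{R}^{n\times m}$ is the transposed Jacobian. An automatic-differentiation oracle is a procedure that, given a trajectory function $\tilde x$ and a point $\bar u$, computes the gradient-vector product $\bar z\mapsto\nabla\tilde x(\bar u)\bar z$ for any $\bar z$ (one call per such back-propagation). *)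

From HB Require Import structures.
From mathcomp Require Import all_boot all_order all_algebra.
From mathcomp Require Import all_classical all_reals all_analysis.
Set Implicit Arguments.
Unset Strict Implicit.
Unset Printing Implicit Defensive.
Import Order.TTheory GRing.Theory Num.Theory.
Import numFieldNormedType.Exports.
Local Open Scope ring_scope.

Section Defs.
Variable R : realType.

Definition dotm m n (M N : 'M[R]_(m, n)) : R := \sum_i \sum_j M i j * N i j.
Definition norm2 m n (M : 'M[R]_(m, n)) : R := Num.sqrt (dotm M M).

Definition lipschitz2 m1 n1 m2 n2 (L : R) (f : 'M[R]_(m1, n1) -> 'M[R]_(m2, n2)) :=
  forall x y, norm2 (f x - f y) <= L * norm2 (x - y).

Definition smooth2 m1 n1 m2 n2 (L : R) (f : 'M[R]_(m1, n1) -> 'M[R]_(m2, n2)) :=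
  (forall x, differentiable f x) /\
  forall x y w, norm2 ('d f x w - 'd f y w) <= L * norm2 (x - y) * norm2 w.

Definition smooth_real m n (L : R) (f : 'M[R]_(m, n) -> R) :=
  (forall x, differentiable f x) /\
  forall x y w, `|'d f x w - 'd f y w| <= L * norm2 (x - y) * norm2 w.

Definition convex_fun m n (f : 'M[R]_(m, n) -> R) :=
  forall x y (t : R), 0 <= t <= 1 ->
    f ((1 - t) *: x + t *: y) <= (1 - t) * f x + t * f y.

(* Controls ubar = (u_0; ...; u_{tau-1}) are stored as the rows of a
   tau x p matrix (tau = n.+1); states x_t are row vectors in R^d. *)
Fixpoint traj n p d (phi : nat -> 'rV[R]_d -> 'rV[R]_p -> 'rV[R]_d)
    (x0 : 'rV[R]_d) (u : 'M[R]_(n.+1, p)) (t : nat) : 'rV[R]_d :=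
  match t with
  | 0 => x0
  | t'.+1 => phi t' (traj phi x0 u t') (row (inord t') u)
  end.

(* Trajectory function: row i (i < tau) is x_{i+1}. *)
Definition xtraj n p d (phi : nat -> 'rV[R]_d -> 'rV[R]_p -> 'rV[R]_d)
    (x0 : 'rV[R]_d) (u : 'M[R]_(n.+1, p)) : 'M[R]_(n.+1, d) :=
  \matrix_(i < n.+1, j < d) traj phi x0 u i.+1 0 j.

Definition xlast n p d phi x0 (u : 'M[R]_(n.+1, p)) : 'rV[R]_d :=
  row ord_max (@xtraj n p d phi x0 u).

(* Gradient-vector product zbar |-> grad F(u) zbar (adjoint of the differential
   w.r.t. the Euclidean inner product): one back-propagation. *)
Definition gvp m1 n1 m2 n2 (F : 'M[R]_(m1, n1) -> 'M[R]_(m2, n2)) u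
    (z : 'M[R]_(m2, n2)) : 'M[R]_(m1, n1) :=
  \matrix_(i, j) dotm z ('d F u (delta_mx i j)).

(* Oracle algorithms. Each step issues one oracle call: either a back-propagation
   query  inl z  (answer inl (grad xtil(u) z)) or a forward (transpose) query
   inr v  (answer inr (grad xtil(u)^T v)). *)
Definition oquery m p d := ('M[R]_(m, d) + 'M[R]_(m, p))%type.
Definition oanswer m p d := ('M[R]_(m, p) + 'M[R]_(m, d))%type.

Record oracle_alg m p d := OracleAlg {
  oa_calls : nat;
  oa_query : seq (oanswer m p d) -> oquery m p d;
  oa_out : seq (oanswer m p d) -> 'M[R]_(m, p) }.

Definition oracle_answer m p d (bwd : 'M[R]_(m, d) -> 'M[R]_(m, p))
    (fwd : 'M[R]_(m, p) -> 'M[R]_(m, d)) (q : oquery m p d) : oanswer m p d :=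
  match q with
  | inl z => inl (bwd z)
  | inr v => inr (fwd v)
  end.

Definition run_alg m p d (A : oracle_alg m p d) bwd fwd : 'M[R]_(m, p) :=
  oa_out A (iter (oa_calls A)
    (fun hs => rcons hs (oracle_answer bwd fwd (oa_query A hs))) [::]).

Definition gn_obj n p d (h : 'rV[R]_d -> R) (g : 'M[R]_(n.+1, p) -> R)
    (gamma : R) phi x0 (u : 'M[R]_(n.+1, p)) (v : 'M[R]_(n.+1, p)) : R :=
  h (@xlast n p d phi x0 u + row ord_max ('d (@xtraj n p d phi x0) u v))
  + g (u + v) + norm2 v ^+ 2 / (2 * gamma).

End Defs.

From HB Require Import structures.
From mathcomp Require Import all_boot all_order all_algebra.
From mathcomp Require Import all_classical all_reals all_analysis.
From mathcomp Require Import ring lra.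
Import Order.TTheory GRing.Theory Num.Theory.
Import numFieldNormedType.Exports.
Local Open Scope ring_scope.
Set Implicit Arguments.
Unset Strict Implicit.

(* The subproblem objective F v = h (b + (J v)_tau) + g (u + v) + |v|^2 / (2 gamma),
   with J the differential of the trajectory at u, is mu-strongly convex for
   mu = 1 / gamma, and since |(J w)_tau| <= M0 |w| (x_tau is M0-Lipschitz) it lies
   below its tangents plus L / 2 |.|^2 with L / 2 = L1h M0^2 + L1g + 1 / (2 gamma).
   Its gradient costs one forward and one backward product with J. Nesterov's
   constant-step method with q = sqrt (mu / L) contracts
   F (x_k) - F v* + mu / 2 |z_k - v*|^2 by 1 - q per step, so
   O (sqrt (L gamma) log (1 / eps)) steps suffice, and
   L gamma <= 2 (L1h M0^2 gamma + L1g gamma + 1). *)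

Section FrobeniusInnerProduct.
Variables (R : realType) (m n : nat).
Implicit Types M N P : 'M[R]_(m, n).

Lemma dotmC M N : dotm M N = dotm N M.
Proof. by apply: eq_bigr => i _; apply: eq_bigr => j _; rewrite mulrC. Qed.

Lemma dotmDl M N P : dotm (M + N) P = dotm M P + dotm N P.
Proof.
rewrite /dotm -big_split; apply: eq_bigr => i _; rewrite -big_split.
by apply: eq_bigr => j _; rewrite mxE mulrDl.
Qed.

Lemma dotmZl a M N : dotm (a *: M) N = a * dotm M N.
Proof.
rewrite /dotm mulr_sumr; apply: eq_bigr => i _; rewrite mulr_sumr.
by apply: eq_bigr => j _; rewrite mxE mulrA.
Qed.

Lemma dotmDr M N P : dotm P (M + N) = dotm P M + dotm P N.
Proof. by rewrite dotmC dotmDl !(dotmC P). Qed.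

Lemma dotmZr a M N : dotm N (a *: M) = a * dotm N M.
Proof. by rewrite dotmC dotmZl dotmC. Qed.

Lemma dotmNl M N : dotm (- M) N = - dotm M N.
Proof. by rewrite -scaleN1r dotmZl mulN1r. Qed.

Lemma dotmNr M N : dotm N (- M) = - dotm N M.
Proof. by rewrite -scaleN1r dotmZr mulN1r. Qed.

Lemma dotmBl M N P : dotm (M - N) P = dotm M P - dotm N P.
Proof. by rewrite dotmDl dotmNl. Qed.

Lemma dotmBr M N P : dotm P (M - N) = dotm P M - dotm P N.
Proof. by rewrite dotmDr dotmNr. Qed.

Lemma dotm0l M : dotm 0 M = 0.
Proof. by rewrite -(scale0r 0) dotmZl mul0r. Qed.

Lemma dotm0r M : dotm M 0 = 0.
Proof. by rewrite dotmC dotm0l. Qed.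

Lemma dotm_ge0 M : 0 <= dotm M M.
Proof. by apply: sumr_ge0 => i _; apply: sumr_ge0 => j _; rewrite -expr2 sqr_ge0. Qed.

Lemma dotm_eq0 M : (dotm M M == 0) = (M == 0).
Proof.
apply/idP/eqP => [|->]; last by rewrite dotm0l.
have entry_sqr_ge0 i j : 0 <= M i j * M i j by rewrite -expr2 sqr_ge0.
rewrite psumr_eq0 => [/allP rows_eq0|i _]; last exact: sumr_ge0.
apply/matrixP => i j; have /rows_eq0 := mem_index_enum i.
rewrite psumr_eq0 // => /allP /(_ j (mem_index_enum j)).
by rewrite mxE mulf_eq0 orbb => /eqP.
Qed.

Lemma norm2_sq M : norm2 M ^+ 2 = dotm M M.
Proof. by rewrite sqr_sqrtr // dotm_ge0. Qed.

Lemma norm2_ge0 M : 0 <= norm2 M.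
Proof. exact: sqrtr_ge0. Qed.

Lemma norm2_eq0 M : (norm2 M == 0) = (M == 0).
Proof. by rewrite sqrtr_eq0 le_eqVlt ltNge dotm_ge0 orbF dotm_eq0. Qed.

Lemma norm2Z a M : norm2 (a *: M) = `|a| * norm2 M.
Proof. by rewrite /norm2 dotmZl dotmZr mulrA sqrtrM ?sqr_ge0 // sqrtr_sqr. Qed.

Lemma norm2N M : norm2 (- M) = norm2 M.
Proof. by rewrite -scaleN1r norm2Z normrN1 mul1r. Qed.

Lemma dotm_sqrD M N : dotm (M + N) (M + N) = dotm M M + 2 * dotm M N + dotm N N.
Proof. by rewrite !dotmDl !dotmDr (dotmC N M); ring. Qed.

Lemma dotm_convex_comb t M N :
  dotm ((1 - t) *: M + t *: N) ((1 - t) *: M + t *: N)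
  = (1 - t) * dotm M M + t * dotm N N - t * (1 - t) * dotm (N - M) (N - M).
Proof. by rewrite !(dotmDl, dotmDr, dotmNl, dotmNr, dotmZl, dotmZr) (dotmC N M); ring. Qed.

Lemma dotm_le_norm2 M N : dotm M N <= norm2 M * norm2 N.
Proof.
have [->|M0] := eqVneq M 0; first by rewrite dotm0l mulr_ge0 ?norm2_ge0.
have [->|N0] := eqVneq N 0; first by rewrite dotm0r mulr_ge0 ?norm2_ge0.
have M_gt0 : 0 < norm2 M by rewrite lt_def norm2_eq0 M0 norm2_ge0.
have N_gt0 : 0 < norm2 N by rewrite lt_def norm2_eq0 N0 norm2_ge0.
have := dotm_ge0 (norm2 N *: M - norm2 M *: N).
rewrite !(dotmBl, dotmBr, dotmZl, dotmZr) (dotmC N M) -!norm2_sq => expand_ge0.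
rewrite -(ler_pM2l (mulr_gt0 M_gt0 N_gt0)); nra.
Qed.

Lemma normr_dotm_le M N : `|dotm M N| <= norm2 M * norm2 N.
Proof.
rewrite ler_norml dotm_le_norm2 andbT lerNl -dotmNr.
by rewrite -[norm2 N]norm2N dotm_le_norm2.
Qed.

End FrobeniusInnerProduct.

Section FastGradientMethod.
Variables (R : realType) (m n : nat).
Variables (F : 'M[R]_(m, n) -> R) (G : 'M[R]_(m, n) -> 'M[R]_(m, n)).
Variables (mu L q : R) (xs : 'M[R]_(m, n)).
Hypotheses (mu_gt0 : 0 < mu) (q_gt0 : 0 < q) (q_le1 : q <= 1) (LqE : L * q ^+ 2 = mu).
Hypothesis F_upper : forall x y,
  F y <= F x + dotm (G x) (y - x) + L / 2 * dotm (y - x) (y - x).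
Hypothesis F_lower : forall x y,
  F x + dotm (G x) (y - x) + mu / 2 * dotm (y - x) (y - x) <= F y.

(* Nesterov's constant-step scheme for strongly convex functions, on pairs
   (x_k, z_k) of an iterate and an estimate-sequence centre; G is queried only
   at the extrapolated point y_k. *)
Definition fgm_extrapolate (s : 'M[R]_(m, n) * 'M[R]_(m, n)) :=
  (1 + q)^-1 *: (s.1 + q *: s.2).

Definition fgm_step (s : 'M[R]_(m, n) * 'M[R]_(m, n)) :=
  let y := fgm_extrapolate s in
  (y - L^-1 *: G y, (1 - q) *: s.2 + q *: y - (q / mu) *: G y).

Definition fgm_potential (s : 'M[R]_(m, n) * 'M[R]_(m, n)) :=
  F s.1 - F xs + mu / 2 * dotm (s.2 - xs) (s.2 - xs).

Lemma L_gt0 : 0 < L.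
Proof. by rewrite -(pmulr_lgt0 _ (exprn_gt0 2 q_gt0)) LqE. Qed.

Lemma gradient_step_descent y :
  F (y - L^-1 *: G y) <= F y - (2 * L)^-1 * dotm (G y) (G y).
Proof.
have := F_upper y (y - L^-1 *: G y).
rewrite [_ - y]addrC addKr !(dotmNl, dotmNr, dotmZl, dotmZr) opprK.
have L_neq0 : L != 0 by rewrite gt_eqF ?L_gt0.
have e1 : L / 2 * (L^-1 * (L^-1 * dotm (G y) (G y))) = (2 * L)^-1 * dotm (G y) (G y).
  by field.
have e2 : L^-1 * dotm (G y) (G y) = 2 * ((2 * L)^-1 * dotm (G y) (G y)) by field.
lra.
Qed.

Lemma fgm_potential_step s : fgm_potential (fgm_step s) <= (1 - q) * fgm_potential s.
Proof.
case: s => x z; rewrite /fgm_potential /fgm_step /=.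
set y := fgm_extrapolate (x, z); set g := G y.
set a := z - xs; set b := y - xs; set c := (1 - q) *: a + q *: b.
have q1_neq0 : 1 + q != 0 by rewrite gt_eqF // ltr_pwDr.
have xE : x - y = q *: (b - a).
  by apply/matrixP => i j; rewrite /b /a /y /fgm_extrapolate !mxE /=; field.
have zE : (1 - q) *: z + q *: y - (q / mu) *: g - xs = c - (q / mu) *: g.
  by apply/matrixP => i j; rewrite !mxE; ring.
have at_xs := F_lower y xs.
rewrite -[xs - y]opprB -/b dotmNr dotmNl dotmNr opprK in at_xs.
clearbody a b.
have at_x := F_lower y x.
rewrite xE dotmZr (dotmBr b a) dotmZl dotmZr in at_x.
have descent := gradient_step_descent y; rewrite -/g in descent.
have sqE : mu / 2 * dotm (c - (q / mu) *: g) (c - (q / mu) *: g)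
         = mu / 2 * dotm c c - q * dotm g c + (2 * L)^-1 * dotm g g.
  rewrite !(dotmBl, dotmBr, dotmZl, dotmZr) (dotmC c g) -LqE.
  by field; rewrite ?gt_eqF ?L_gt0.
rewrite zE sqE /c dotm_convex_comb (dotmDr _ _ g) !(dotmZr _ _ g).
have := ler_wpM2l (ltW q_gt0) at_xs.
have q1_ge0 : 0 <= 1 - q by rewrite subr_ge0.
have := ler_wpM2l q1_ge0 at_x.
have w_ge0 : 0 <= mu / 2 * (q * (1 - q) * (1 + q)).
  apply: mulr_ge0; first exact: divr_ge0 (ltW mu_gt0) _.
  by apply: mulr_ge0; [exact: mulr_ge0 (ltW q_gt0) q1_ge0 | exact: addr_ge0 ler01 (ltW q_gt0)].
have := mulr_ge0 w_ge0 (dotm_ge0 (b - a)).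
lra.
Qed.

Lemma fgm_potential_iter k s :
  fgm_potential (iter k fgm_step s) <= (1 - q) ^+ k * fgm_potential s.
Proof.
elim: k => [|k IH] /=; first by rewrite mul1r.
apply: le_trans (fgm_potential_step _) _.
by rewrite exprS -mulrA ler_wpM2l // subr_ge0.
Qed.

Hypothesis xs_min : forall w, F xs <= F w.

Lemma G_argmin_eq0 : G xs = 0.
Proof.
apply/eqP; rewrite -dotm_eq0 eq_le dotm_ge0 andbT.
have := le_trans (xs_min _) (gradient_step_descent xs).
by rewrite -subr_ge0 addrAC subrr add0r oppr_ge0 pmulr_rle0 // invr_gt0 mulr_gt0 ?L_gt0.
Qed.

Lemma fgm_potential0 : fgm_potential (0, 0) <= 2 * (F 0 - F xs).
Proof.
have := F_lower xs 0; have := xs_min 0.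
rewrite /fgm_potential /= G_argmin_eq0 dotm0l; lra.
Qed.

Theorem fgm_rate k :
  F (iter k fgm_step (0, 0)).1 - F xs <= 2 * (1 - q) ^+ k * (F 0 - F xs).
Proof.
apply: le_trans (_ : _ <= fgm_potential (iter k fgm_step (0, 0))) _.
  by rewrite lerDl mulr_ge0 ?dotm_ge0 ?divr_ge0 ?ltW.
apply: le_trans (fgm_potential_iter _ _) _.
rewrite [2 * _]mulrC -mulrA ler_wpM2l ?exprn_ge0 ?subr_ge0 //.
exact: fgm_potential0.
Qed.

End FastGradientMethod.

Section LinearMatrixMaps.
Variables (R : realType) (m n : nat) (W : normedModType R).
Variable f : 'M[R]_(m, n) -> W.
Hypothesis f_linear : linear f.

Lemma linear_mx_sum_delta :
  f = \sum_i \sum_j (fun M : 'M[R]_(m, n) => M i j *: f (delta_mx i j)).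
Proof.
pose fL : {linear 'M[R]_(m, n) -> W} := HB.pack f (GRing.isLinear.Build _ _ _ _ f f_linear).
apply/funext => M; rewrite -[f M]/(fL M) {1}(matrix_sum_delta M) linear_sum fct_sumE.
apply: eq_bigr => i _; rewrite linear_sum fct_sumE.
by apply: eq_bigr => j _; rewrite linearZ.
Qed.

Lemma linear_mx_continuous : continuous f.
Proof.
move=> x; apply: differentiable_continuous; rewrite linear_mx_sum_delta.
apply: differentiable_sum => i; apply: differentiable_sum => j.
exact: differentiableZl (differentiable_coord _ _ _).
Qed.

Lemma linear_mx_differentiable x : differentiable f x /\ 'd f x = f :> (_ -> _).
Proof.
pose fL : {linear 'M[R]_(m, n) -> W} := HB.pack f (GRing.isLinear.Build _ _ _ _ f f_linear).
have fL_cont : continuous fL := linear_mx_continuous.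
by split; [exact: (linear_differentiable x fL_cont) | exact: (diff_lin x fL_cont)].
Qed.

End LinearMatrixMaps.

Section SmoothRealFunctions.
Variables (R : realType) (m n : nat) (f : 'M[R]_(m, n) -> R) (L : R).
Hypotheses (f_smooth : smooth_real L f) (L_ge0 : 0 <= L).

Lemma is_derive_along_line x w k t :
  is_derive t (1 : R) (fun s : R => f (s *: w + x) - s * k) ('d f (t *: w + x) w - k).
Proof.
have f_diff := f_smooth.1.
have line_is_diff : is_diff t (( *:%R ^~ w) + cst x) (( *:%R ^~ w) + 0).
  exact: is_diffD.
have line_diff : differentiable (fun s : R => s *: w + x) t.
  exact: @ex_diff _ _ _ _ _ _ _ line_is_diff.
have dline : 'd (fun s : R => s *: w + x) t = ( *:%R ^~ w) :> (R -> _).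
  by rewrite (@diff_val _ _ _ _ _ _ _ line_is_diff) addr0.
have f_line_diff : differentiable (f \o (fun s : R => s *: w + x)) t.
  exact: differentiable_comp (f_diff _).
have slope_diff : differentiable (fun s : R => s * k) t.
  exact: @ex_diff _ _ _ _ _ _ _ (is_diff_scalel t k).
have psi_diff : differentiable (fun s : R => f (s *: w + x) - s * k) t.
  exact: differentiableB.
apply: DeriveDef; first exact: diff_derivable.
rewrite deriveE // diffB // diff_comp ?f_diff // /= dline /= scale1r.
by rewrite (@diff_val _ _ _ _ _ _ _ (is_diff_scalel t k)) /= scale1r.
Qed.

Lemma smooth_real_taylor x w : `|f (x + w) - f x - 'd f x w| <= L * dotm w w.
Proof.
set k := 'd f x w; set psi := fun s : R => f (s *: w + x) - s * k.
have psi_deriv t := is_derive_along_line x w k t.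
have psi_cont : {within `[0, 1], continuous psi}%classic.
  by apply: derivable_within_continuous => t _; have [] := psi_deriv t.
have [t t01 mvt] := MVT_segment ler01 (fun t _ => psi_deriv t) psi_cont.
have -> : f (x + w) - f x - k = psi 1 - psi 0.
  by rewrite /psi !scale0r !scale1r add0r mul0r mul1r subr0 (addrC w x); ring.
rewrite mvt subr0 mulr1 /k.
have := f_smooth.2 (t *: w + x) x w; rewrite addrK norm2Z => /le_trans; apply.
move: t01; rewrite in_itv /= => /andP[t_ge0 t_le1].
by rewrite -!mulrA -expr2 norm2_sq ger0_norm // ler_wpM2l // ler_piMl ?dotm_ge0.
Qed.

Lemma smooth_real_upper x w : f (x + w) <= f x + 'd f x w + L * dotm w w.
Proof. by have := smooth_real_taylor x w; rewrite ler_norml => /andP[_]; lra. Qed.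

Lemma smooth_real_lower x w : f x + 'd f x w - L * dotm w w <= f (x + w).
Proof. by have := smooth_real_taylor x w; rewrite ler_norml => /andP[+ _]; lra. Qed.

Hypothesis f_convex : convex_fun f.

Lemma convex_tangent_le x y : f x + 'd f x (y - x) <= f y.
Proof.
set D := 'd f x (y - x); set c := L * dotm (y - x) (y - x).
have c_ge0 : 0 <= c by rewrite mulr_ge0 ?dotm_ge0.
have chord t : 0 < t -> t <= 1 -> t * D <= t * (f y - f x + c * t).
  move=> t_gt0 t_le1.
  have := f_convex x y (t := t); rewrite ltW //= t_le1 => /(_ isT).
  rewrite (_ : (1 - t) *: x + t *: y = x + t *: (y - x)); last first.
    by apply/matrixP => i j; rewrite !mxE; ring.
  have := smooth_real_lower x (t *: (y - x)).
  rewrite linearZ /= dotmZl dotmZr -/D -[t *: D]/(t * D) /c; lra.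
apply/ler_addgt0Pr => e e_gt0; set t := Order.min 1 (e / (c + 1)).
have t_gt0 : 0 < t by rewrite lt_min ltr01 divr_gt0 // ltr_pwDr.
have t_le1 : t <= 1 by rewrite ge_min lexx.
have ct_le : c * t <= e.
  apply: le_trans (ler_wpM2l c_ge0 (_ : t <= e / (c + 1))) _.
    by rewrite ge_min lexx orbT.
  by rewrite mulrA ler_pdivrMr ?ltr_pwDr //; lra.
by have := chord t t_gt0 t_le1; rewrite ler_pM2l //; lra.
Qed.

End SmoothRealFunctions.

Section LipschitzDifferential.
Variables (R : realType) (a b c e : nat) (F : 'M[R]_(a, b) -> 'M[R]_(c, e)).
Variables (M0 : R) (u : 'M[R]_(a, b)).
Hypotheses (M0_ge0 : 0 <= M0) (F_diff : differentiable F u) (F_lip : lipschitz2 M0 F).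

(* Differentiating psi := dotm v \o F along w at u gives |v|^2 for v := 'd F u w,
   while its difference quotients are at most |v| M0 |w| by Cauchy-Schwarz. *)
Lemma norm2_diff_le w : norm2 ('d F u w) <= M0 * norm2 w.
Proof.
set v := 'd F u w; pose psi := dotm v \o F.
have dotm_v_linear : linear (dotm v) by move=> k M N; rewrite dotmDr dotmZr.
have [dotm_v_diff dotm_vE] := linear_mx_differentiable dotm_v_linear (F u).
have psi_diff : differentiable psi u by exact: differentiable_comp.
have psi_derive : 'D_w psi u = norm2 v ^+ 2.
  by rewrite deriveE // diff_comp // dotm_vE norm2_sq.
have : 'D_w psi u <= norm2 v * (M0 * norm2 w).
  apply: limr_le; first exact: diff_derivable.
  near=> h.
  have h_neq0 : h != 0 by near: h; exact: nbhs_dnbhs_neq.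
  rewrite /= /psi /= -dotmBr -[h^-1 *: _]/(h^-1 * _).
  have := F_lip (h *: w + u) u; rewrite addrK norm2Z => F_incr.
  apply: le_trans (ler_norm _) _; rewrite normrM normfV ler_pdivrMl ?normr_gt0 //.
  apply: le_trans (normr_dotm_le _ _) _.
  by rewrite mulrCA ler_wpM2l ?norm2_ge0 // mulrCA.
rewrite psi_derive; have := norm2_ge0 v.
have := mulr_ge0 M0_ge0 (norm2_ge0 w); set y := M0 * norm2 w; nra.
Unshelve. all: by end_near.
Qed.

End LipschitzDifferential.

Section TrajectoryDifferentiability.
Variables (R : realType) (n p d : nat).
Variables (phi : nat -> 'rV[R]_d -> 'rV[R]_p -> 'rV[R]_d) (x0 : 'rV[R]_d).
Hypothesis phi_diff : forall t, (t < n.+1)%N -> forall w : 'rV[R]_(d + p),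
  differentiable (fun w => phi t (lsubmx w) (rsubmx w)) w.

Lemma traj_differentiable k (u : 'M[R]_(n.+1, p)) : (k <= n.+1)%N ->
  differentiable (fun u => traj phi x0 u k) u.
Proof.
elim: k => [|k IH] k_le /=; first exact: differentiable_cst.
pose stack (w : 'rV[R]_(d + p)) := phi k (lsubmx w) (rsubmx w).
pose embl (x : 'rV[R]_d) := row_mx x (0 : 'rV[R]_p).
pose embr (v : 'M[R]_(n.+1, p)) := row_mx (0 : 'rV[R]_d) (row (inord k) v).
have embl_linear : linear embl.
  by move=> c x y; rewrite /embl scale_row_mx add_row_mx scaler0 addr0.
have embr_linear : linear embr.
  move=> c x y; rewrite /embr scale_row_mx add_row_mx scaler0 addr0.
  by congr row_mx; apply/rowP => j; rewrite !mxE.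
have -> : (fun v => phi k (traj phi x0 v k) (row (inord k) v))
          = stack \o (embl \o (fun v => traj phi x0 v k) + embr).
  apply/funext => v; rewrite /stack /embl /embr /= fctE /= add_row_mx addr0 add0r.
  by rewrite row_mxKl row_mxKr.
apply: differentiable_comp; last exact: phi_diff.
apply: differentiableD; last exact: (linear_mx_differentiable embr_linear u).1.
apply: differentiable_comp; first exact: IH (ltnW k_le).
exact: (linear_mx_differentiable embl_linear _).1.
Qed.

Lemma xtrajE (u : 'M[R]_(n.+1, p)) :
  xtraj phi x0 u = \sum_(i < n.+1) delta_mx i 0 *m traj phi x0 u i.+1.
Proof.
apply/matrixP => i j; rewrite mxE summxE (bigD1 i) //= big1 => [|k /negbTE ki].
  by rewrite mxE big_ord1 !mxE !eqxx mul1r addr0.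
by rewrite mxE big_ord1 !mxE eq_sym ki mul0r.
Qed.

Lemma xtraj_differentiable (u : 'M[R]_(n.+1, p)) : differentiable (xtraj phi x0) u.
Proof.
have -> : xtraj phi x0 = \sum_(i < n.+1)
    ((fun r : 'rV[R]_d => delta_mx i 0 *m r) \o (fun u => traj phi x0 u i.+1)).
  by apply/funext => v; rewrite fct_sumE xtrajE.
apply: differentiable_sum => i; apply: differentiable_comp.
  exact: traj_differentiable.
have mul_linear : linear (fun r : 'rV[R]_d => delta_mx i 0 *m r :> 'M[R]_(n.+1, d)).
  by move=> c r r'; rewrite mulmxDr scalemxAr.
exact: (linear_mx_differentiable mul_linear _).1.
Qed.

End TrajectoryDifferentiability.

Section Gradients.
Variable R : realType.

Definition gradm (a b : nat) (f : 'M[R]_(a, b) -> R) x : 'M[R]_(a, b) :=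
  \matrix_(i, j) 'd f x (delta_mx i j).

Lemma linear_mx_dotmE (a b : nat) (l : 'M[R]_(a, b) -> R) v : linear l ->
  l v = dotm (\matrix_(i, j) l (delta_mx i j)) v.
Proof.
move=> l_linear; rewrite {1}(linear_mx_sum_delta l_linear) fct_sumE.
apply: eq_bigr => i _; rewrite fct_sumE.
by apply: eq_bigr => j _; rewrite mxE mulrC.
Qed.

Lemma gradmE (a b : nat) (f : 'M[R]_(a, b) -> R) x v : 'd f x v = dotm (gradm f x) v.
Proof. by apply: linear_mx_dotmE => k y z; rewrite linearP. Qed.

Lemma gvpE (a b c e : nat) (F : 'M[R]_(a, b) -> 'M[R]_(c, e)) u z v :
  dotm (gvp F u z) v = dotm z ('d F u v).
Proof.
have dotm_zd_linear : linear (fun v => dotm z ('d F u v)).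
  by move=> k x y; rewrite linearP dotmDr dotmZr.
by rewrite (linear_mx_dotmE v dotm_zd_linear).
Qed.

Lemma dotm_delta_mul (a d : nat) (i : 'I_a) (r : 'rV[R]_d) (M : 'M[R]_(a, d)) :
  dotm (delta_mx i 0 *m r) M = dotm r (row i M).
Proof.
rewrite /dotm (bigD1 i) //= [X in _ + X]big1 ?addr0.
  by rewrite big_ord1; apply: eq_bigr => j _; rewrite !mxE big_ord1 !mxE !eqxx mul1r.
move=> k /negbTE ki; apply: big1 => j _.
by rewrite mxE big_ord1 mxE ki mul0r mul0r.
Qed.

End Gradients.

Section FastGradientOracle.
Variables (R : realType) (n p d : nat) (h : 'rV[R]_d -> R) (g : 'M[R]_(n.+1, p) -> R).
Variables (gamma : R) (u : 'M[R]_(n.+1, p)) (b : 'rV[R]_d) (mu L q : R).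

(* The gradient of the subproblem objective at v is
   J^T (e_tau (grad h (b + (J v)_tau))) + grad g (u + v) + v / gamma, with J the
   differential of the trajectory: one forward product J v followed by one
   back-propagation J^T z. *)
Definition backprop_seed (jv : 'M[R]_(n.+1, d)) : 'M[R]_(n.+1, d) :=
  delta_mx ord_max 0 *m gradm h (b + row ord_max jv).

Definition gn_grad_of (jtz v : 'M[R]_(n.+1, p)) : 'M[R]_(n.+1, p) :=
  jtz + gradm g (u + v) + gamma^-1 *: v.

(* Applied to the reversed transcript, newest answer first: each step of the method
   consumes a forward answer followed by a back-propagation answer. The defaults 0
   are never reached on transcripts produced by run_alg. *)
Fixpoint fgm_state (hs : seq (oanswer R n.+1 p d)) :=
  match hs with
  | a :: _ :: hs' =>
      fgm_step (gn_grad_of (if a is inl jtz then jtz else 0)) mu L q (fgm_state hs')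
  | _ => (0, 0)
  end.

Definition fgm_query (hs : seq (oanswer R n.+1 p d)) : oquery R n.+1 p d :=
  if odd (size hs)
  then inl (backprop_seed (if last (inl 0) hs is inr jv then jv else 0))
  else inr (fgm_extrapolate q (fgm_state (rev hs))).

Definition fgm_oracle (K : nat) : oracle_alg R n.+1 p d :=
  OracleAlg K.*2 fgm_query (fun hs => (fgm_state (rev hs)).1).

Variable bwd : 'M[R]_(n.+1, d) -> 'M[R]_(n.+1, p).
Variable fwd : 'M[R]_(n.+1, p) -> 'M[R]_(n.+1, d).

Definition gn_grad (v : 'M[R]_(n.+1, p)) := gn_grad_of (bwd (backprop_seed (fwd v))) v.

Let oracle_round hs := rcons hs (oracle_answer bwd fwd (fgm_query hs)).

Lemma fgm_oracle_transcript k :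
  fgm_state (rev (iter k.*2 oracle_round [::])) = iter k (fgm_step gn_grad mu L q) (0, 0).
Proof.
elim: k => // k IH; rewrite doubleS /= -IH.
set hs := iter k.*2 oracle_round [::].
have size_hs : size hs = k.*2.
  by rewrite /hs; elim: k.*2 {IH hs} => //= j IHj; rewrite size_rcons IHj.
rewrite /oracle_round /fgm_query size_rcons size_hs /= odd_double last_rcons !rev_rcons.
by rewrite /= /fgm_step /gn_grad.
Qed.

Lemma run_fgm_oracle K :
  run_alg (fgm_oracle K) bwd fwd = (iter K (fgm_step gn_grad mu L q) (0, 0)).1.
Proof. by rewrite -fgm_oracle_transcript. Qed.

End FastGradientOracle.

Section GaussNewtonSubproblem.
Variables (R : realType) (n p d : nat) (h : 'rV[R]_d -> R) (g : 'M[R]_(n.+1, p) -> R).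
Variables (L1h L1g M0 gamma : R) (u : 'M[R]_(n.+1, p)) (b : 'rV[R]_d).
Variables (phi : nat -> 'rV[R]_d -> 'rV[R]_p -> 'rV[R]_d) (x0 : 'rV[R]_d).
Hypotheses (L1h_ge0 : 0 <= L1h) (L1g_ge0 : 0 <= L1g) (M0_ge0 : 0 <= M0).
Hypothesis gamma_gt0 : 0 < gamma.
Hypotheses (h_convex : convex_fun h) (h_smooth : smooth_real L1h h).
Hypotheses (g_convex : convex_fun g) (g_smooth : smooth_real L1g g).
Hypothesis xtraj_diff : differentiable (@xtraj R n p d phi x0) u.
Hypothesis xlast_lip : lipschitz2 M0 (@xlast R n p d phi x0).
Hypothesis xlast_u : xlast phi x0 u = b.

Let J := 'd (xtraj phi x0) u.
Let Jlast v := row ord_max (J v).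
Let F := gn_obj h g gamma phi x0 u.
Let G := gn_grad h g gamma u b (gvp (xtraj phi x0) u) J.

Lemma JlastB x y : Jlast (y - x) = Jlast y - Jlast x.
Proof. by rewrite /Jlast linearB; apply/rowP => j; rewrite !mxE. Qed.

Lemma gn_objE v : F v = h (b + Jlast v) + g (u + v) + dotm v v / (2 * gamma).
Proof. by rewrite /F /gn_obj xlast_u norm2_sq. Qed.

Lemma gn_gradE y w :
  dotm (G y) w = 'd h (b + Jlast y) (Jlast w) + 'd g (u + y) w + gamma^-1 * dotm y w.
Proof. by rewrite /G /gn_grad /gn_grad_of !dotmDl gvpE dotm_delta_mul dotmZl -!gradmE. Qed.

Lemma Jlast_sqr_le w : dotm (Jlast w) (Jlast w) <= M0 ^+ 2 * dotm w w.
Proof.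
have row_linear : linear (@row R n.+1 d ord_max).
  by move=> k x y; apply/rowP => j; rewrite !mxE.
have [row_diff rowE] := linear_mx_differentiable row_linear (xtraj phi x0 u).
have xlast_diff : differentiable (xlast phi x0) u := differentiable_comp xtraj_diff row_diff.
have := norm2_diff_le M0_ge0 xlast_diff xlast_lip w.
rewrite (_ : xlast phi x0 = row ord_max \o xtraj phi x0) // diff_comp //= rowE.
rewrite -!norm2_sq -exprMn => Jlast_le.
by apply: lerXn2r; rewrite ?nnegrE ?mulr_ge0 ?norm2_ge0.
Qed.

Lemma gn_obj_upper x y :
  F y <= F x + dotm (G x) (y - x)
         + (L1h * M0 ^+ 2 + L1g + (2 * gamma)^-1) * dotm (y - x) (y - x).
Proof.
rewrite !gn_objE gn_gradE; set w := y - x.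
have yE : y = x + w by rewrite /w addrC subrK.
have sqE : dotm y y = dotm x x + 2 * dotm x w + dotm w w by rewrite {1 2}yE dotm_sqrD.
have -> : b + Jlast y = (b + Jlast x) + Jlast w.
  by rewrite JlastB; apply/rowP => j; rewrite !mxE; ring.
have -> : u + y = (u + x) + w by rewrite yE addrA.
have := smooth_real_upper h_smooth L1h_ge0 (b + Jlast x) (Jlast w).
have := smooth_real_upper g_smooth L1g_ge0 (u + x) w.
have := ler_wpM2l L1h_ge0 (Jlast_sqr_le w).
have : gamma^-1 = 2 * (2 * gamma)^-1 by field; rewrite gt_eqF.
rewrite sqE; lra.
Qed.

Lemma gn_obj_lower x y :
  F x + dotm (G x) (y - x) + gamma^-1 / 2 * dotm (y - x) (y - x) <= F y.
Proof.
rewrite !gn_objE gn_gradE; set w := y - x.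
have sqE : dotm y y = dotm x x + 2 * dotm x w + dotm w w.
  by rewrite {1 2}(_ : y = x + w) ?dotm_sqrD // /w addrC subrK.
have := convex_tangent_le h_smooth L1h_ge0 h_convex (b + Jlast x) (b + Jlast y).
have -> : b + Jlast y - (b + Jlast x) = Jlast w.
  by rewrite JlastB; apply/rowP => j; rewrite !mxE; ring.
have := convex_tangent_le g_smooth L1g_ge0 g_convex (u + x) (u + y).
have -> : u + y - (u + x) = w by rewrite /w opprD addrACA subrr add0r.
have : gamma^-1 = 2 * (2 * gamma)^-1 by field; rewrite gt_eqF.
rewrite sqE; lra.
Qed.

Variable s : R.
Hypotheses (s_gt0 : 0 < s) (s_sqr : s ^+ 2 = 2 * (L1h * M0 ^+ 2 + L1g) * gamma + 1).

Theorem gn_fgm_rate K vstar : (forall w, F vstar <= F w) ->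
  F (run_alg (fgm_oracle h g gamma u b gamma^-1 (gamma^-1 * s ^+ 2) s^-1 K)
       (gvp (xtraj phi x0) u) J) - F vstar
  <= 2 * (1 - s^-1) ^+ K * (F 0 - F vstar).
Proof.
move=> vstar_min; rewrite run_fgm_oracle.
have s_ge1 : 1 <= s.
  have A_ge0 : 0 <= L1h * M0 ^+ 2 + L1g by rewrite addr_ge0 // mulr_ge0 ?sqr_ge0.
  rewrite -(@expr_ge1 _ 2) ?(ltW s_gt0) // s_sqr.
  by have := mulr_ge0 (mulr_ge0 (ler0n _ 2) A_ge0) (ltW gamma_gt0); lra.
have mu_gt0 : 0 < gamma^-1 by rewrite invr_gt0.
have q_gt0 : 0 < s^-1 by rewrite invr_gt0.
have q_le1 : s^-1 <= 1 by rewrite invf_le1.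
have LqE : gamma^-1 * s ^+ 2 * s^-1 ^+ 2 = gamma^-1.
  by rewrite -mulrA -exprMn mulfV ?gt_eqF // expr1n mulr1.
have upper x y : F y <= F x + dotm (G x) (y - x)
    + gamma^-1 * s ^+ 2 / 2 * dotm (y - x) (y - x).
  have -> : gamma^-1 * s ^+ 2 / 2 = L1h * M0 ^+ 2 + L1g + (2 * gamma)^-1.
    by rewrite s_sqr; field; rewrite gt_eqF.
  exact: gn_obj_upper.
exact: fgm_rate mu_gt0 q_gt0 q_le1 LqE upper gn_obj_lower vstar_min K.
Qed.

End GaussNewtonSubproblem.

Lemma geometric_le_eps (R : realType) (s eps : R) : 1 <= s -> 0 < eps ->
  2 * (1 - s^-1) ^+ (Num.truncn (s * (ln (1 / eps) + 1))).+1 <= eps.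
Proof.
move=> s_ge1 eps_gt0; set ell := ln (1 / eps) + 1; set K := (Num.truncn (s * ell)).+1.
have s_gt0 : 0 < s := lt_le_trans ltr01 s_ge1.
have : (1 - s^-1) ^+ K <= expR (- ell).
  apply: le_trans (_ : _ <= expR (- s^-1) ^+ K) _.
    by apply: lerXn2r; rewrite ?nnegrE ?expR_ge0 ?subr_ge0 ?invf_le1 ?expR_ge1Dx.
  rewrite -expRM_natl ler_expR mulrN lerN2 ler_pdivlMr // mulrC.
  exact/ltW/truncnS_gt.
have -> : expR (- ell) = eps / expR 1.
  by rewrite opprD expRD expRN lnK ?posrE ?divr_gt0 // invf_div divr1 expRN.
move=> /(ler_wpM2l (ler0n _ 2)) /le_trans; apply.
have e_ge2 : 2 <= expR (1 : R) by have := expR_ge1Dx (1 : R).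
by rewrite mulrCA ger_pMr // ler_pdivrMr ?expR_gt0 // mul1r.
Qed.

Lemma fgm_calls_le (R : realType) (s kappa ell : R) :
  1 <= s -> s <= 2 * Num.sqrt kappa -> 1 <= ell ->
  ((Num.truncn (s * ell)).+1.*2)%:R <= 8 * Num.sqrt kappa * ell.
Proof.
move=> s_ge1 s_le ell_ge1.
have se_ge1 : 1 <= s * ell by rewrite -[1]mulr1 ler_pM.
have K_le : ((Num.truncn (s * ell)).+1)%:R <= s * ell + 1.
  by rewrite -natr1 lerD2r; have /andP[] := truncn_itv (le_trans ler01 se_ge1).
have := ler_wpM2r (le_trans ler01 ell_ge1) s_le.
by rewrite -mul2n natrM; lra.
Qed.

Theorem proposition5 (R : realType) :
  exists C : R, 0 < C /\
  forall (n p d : nat) (h : 'rV[R]_d -> R) (g : 'M[R]_(n.+1, p) -> R)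
    (L1h L1g M0 gamma eps : R) (u : 'M[R]_(n.+1, p)) (b : 'rV[R]_d),
    0 <= L1h -> 0 <= L1g -> 0 <= M0 -> 0 < gamma -> 0 < eps < 1 ->
    convex_fun h -> smooth_real L1h h ->
    convex_fun g -> smooth_real L1g g ->
    (exists gt : 'I_n.+1 -> 'rV[R]_p -> R,
        forall w : 'M[R]_(n.+1, p), g w = \sum_(t < n.+1) gt t (row t w)) ->
    exists A : oracle_alg R n.+1 p d,
      (oa_calls A)%:R
        <= C * Num.sqrt (L1h * M0 ^+ 2 * gamma + L1g * gamma + 1)
             * (ln (1 / eps) + 1) /\
      forall (phi : nat -> 'rV[R]_d -> 'rV[R]_p -> 'rV[R]_d) (x0 : 'rV[R]_d)
        (L0 L1 : R),
        0 <= L0 -> 0 <= L1 ->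
        (forall t, (t < n.+1)%N ->
           lipschitz2 L0 (fun w : 'rV[R]_(d + p) => phi t (lsubmx w) (rsubmx w)) /\
           smooth2 L1 (fun w : 'rV[R]_(d + p) => phi t (lsubmx w) (rsubmx w))) ->
        lipschitz2 M0 (@xlast R n p d phi x0) ->
        xlast phi x0 u = b ->
        let vout := run_alg A (gvp (@xtraj R n p d phi x0) u)
                              ('d (@xtraj R n p d phi x0) u) in
        forall vstar : 'M[R]_(n.+1, p),
          (forall w, gn_obj h g gamma phi x0 u vstar <= gn_obj h g gamma phi x0 u w) ->
          gn_obj h g gamma phi x0 u vout - gn_obj h g gamma phi x0 u vstar
            <= eps * (gn_obj h g gamma phi x0 u 0 - gn_obj h g gamma phi x0 u vstar).
Proof.
exists 8; split=> // n p d h g L1h L1g M0 gamma eps u b L1h_ge0 L1g_ge0 M0_ge0 gamma_gt0.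
case/andP=> eps_gt0 eps_lt1 h_convex h_smooth g_convex g_smooth _.
set kappa := L1h * M0 ^+ 2 * gamma + L1g * gamma + 1.
have kappa_ge1 : 1 <= kappa.
  have := mulr_ge0 (mulr_ge0 L1h_ge0 (sqr_ge0 M0)) (ltW gamma_gt0).
  by have := mulr_ge0 L1g_ge0 (ltW gamma_gt0); rewrite /kappa; lra.
set s := Num.sqrt (2 * kappa - 1).
have s_sqr : s ^+ 2 = 2 * (L1h * M0 ^+ 2 + L1g) * gamma + 1.
  by rewrite sqr_sqrtr; [rewrite /kappa; ring | lra].
have s_gt0 : 0 < s by rewrite sqrtr_gt0; lra.
have s_ge1 : 1 <= s by rewrite -sqrtr1 ler_sqrt; lra.
have s_le : s <= 2 * Num.sqrt kappa.
  rewrite -(@ler_pXn2r _ 2) ?nnegrE ?mulr_ge0 ?sqrtr_ge0 // exprMn !sqr_sqrtr; lra.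
set ell := ln (1 / eps) + 1.
have ell_ge1 : 1 <= ell by rewrite lerDr ln_ge0 // ler_pdivlMr // mul1r ltW.
exists (fgm_oracle h g gamma u b gamma^-1 (gamma^-1 * s ^+ 2) s^-1 (Num.truncn (s * ell)).+1).
split; first exact: fgm_calls_le.
move=> phi x0 L0 L1 _ _ phi_smooth xlast_lip xlast_u vout vstar vstar_min.
have xtraj_diff : differentiable (xtraj phi x0) u.
  by apply: xtraj_differentiable => t t_lt w; exact: (phi_smooth t t_lt).2.1.
apply: le_trans (gn_fgm_rate L1h_ge0 L1g_ge0 M0_ge0 gamma_gt0 h_convex h_smooth g_convex
  g_smooth xtraj_diff xlast_lip xlast_u s_gt0 s_sqr _ vstar_min) _.
by rewrite ler_wpM2r ?subr_ge0 ?geometric_le_eps.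
Qed.
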